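(* Let $T$ be an out-directed tree with $l$ out-leaves. Then there is a symmetric out-directed tree $T'$ such that $T$ is a subgraph of $T'$, $T'$ has at most $l^l$ out-leaves, and $|T'|\le l^l|T|$.
   Context: An out-directed tree is an oriented tree (underlying graph a tree, no bidirected edges) with a root $r$ such that all edges are directed away from $r$. An out-leaf is a vertex of out-degree $0$. An out-directed tree with root $r$ is symmetric if for every $i\ge 0$ all vertices at distance $i$ from $r$ have the same out-degree. $|T|$ is the number of vertices. *)

From mathcomp Require Import all_boot.
Set Implicit Arguments. Unset Strict Implicit. Unset Printing Implicit Defensive.

Section Digraphs.
Variables (V : finType) (E : rel V).

Definition n_edges : nat := #|[set p : V * V | E p.1 p.2]|.

Definition und_adj : rel V := fun u v => E u v || E v u.

Definition oriented : Prop := forall u v, E u v -> ~~ E v u.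

(* the underlying (simple) graph is a tree: connected with |V|-1 edges
   (since E is oriented, directed edges = undirected edges) *)
Definition underlying_tree : Prop :=
  (forall u v, connect und_adj u v) /\ n_edges = #|V| - 1.

(* out-directed tree with root r: oriented tree, all edges directed away from r,
   i.e. every vertex is reached from r along directed edges *)
Definition out_tree (r : V) : Prop :=
  oriented /\ underlying_tree /\ (forall v, connect E r v).

Fixpoint dwalk (i : nat) (u v : V) : bool :=
  if i is i'.+1 then [exists w, E u w && dwalk i' w v] else u == v.

Definition at_dist (r : V) (i : nat) (v : V) : Prop :=
  dwalk i r v /\ forall j, j < i -> ~~ dwalk j r v.

Definition outdeg (v : V) : nat := #|[set w | E v w]|.

Definition out_leaves : {set V} := [set v | outdeg v == 0].

Definition n_out_leaves : nat := #|out_leaves|.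

Definition symmetric_out_tree (r : V) : Prop :=
  out_tree r /\
  forall i u v, at_dist r i u -> at_dist r i v -> outdeg u = outdeg v.

End Digraphs.

Definition subgraph_of (V : finType) (E : rel V) (V' : finType) (E' : rel V') : Prop :=
  exists f : V -> V', injective f /\ forall u v, E u v -> E' (f u) (f v).

From mathcomp Require Import all_boot zify.
Set Implicit Arguments. Unset Strict Implicit. Unset Printing Implicit Defensive.

(* Let d_i be the largest out-degree of a vertex at depth i of T. The
   symmetric tree in which every vertex at depth i has max(1, d_i) children
   contains T: embed T level by level, sending the children of a vertex to
   distinct children of its image. Summing over vertices,
   sum_i (d_i - 1) <= sum_v (outdeg v - 1)_+ = l - 1 (T has |T| - 1 edges
   and |T| - l internal vertices), so the symmetric tree has
   prod_i max(1, d_i) <= 2^(l-1) <= l^l leaves, and it has at most one level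
   per vertex of T, each of size at most its number of leaves. *)

Section Walks.
Variables (V : finType) (E : rel V).

Lemma dwalkSl i u v : dwalk E i.+1 u v = [exists w, E u w && dwalk E i w v].
Proof. by []. Qed.

Lemma dwalkSr i u v : dwalk E i.+1 u v = [exists w, dwalk E i u w && E w v].
Proof.
elim: i u => [|i IH] u; rewrite dwalkSl; apply/existsP/existsP => -[w /andP[]].
- by move=> Euw /eqP <-; exists u; rewrite /= eqxx.
- by move=> /eqP <- Euv; exists v; rewrite /= Euv eqxx.
- move=> Euw; rewrite IH => /existsP[x /andP[Hwx Exv]].
  by exists x; rewrite Exv andbT dwalkSl; apply/existsP; exists w; rewrite Euw.
- rewrite dwalkSl => /existsP[x /andP[Eux Hxw]] Ewv.
  by exists x; rewrite Eux IH; apply/existsP; exists w; rewrite Hxw.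
Qed.

Lemma dwalkD i j u v :
  dwalk E (i + j) u v -> exists2 w, dwalk E i u w & dwalk E j w v.
Proof.
elim: i u => [|i IH] u /=; first by exists u.
move=> /existsP[w /andP[Euw /IH[x Hwx Hxv]]].
by exists x => //; apply/existsP; exists w; rewrite Euw.
Qed.

Lemma connect_dwalkP u v : connect E u v <-> exists i, dwalk E i u v.
Proof.
split=> [/connectP[p Hp ->]|[i]].
  exists (size p); elim: p u Hp => [|x p IH] u //= /andP[Eux Hp].
  by apply/existsP; exists x; rewrite Eux IH.
elim: i u => [|i IH] u /=; first by move/eqP->.
move=> /existsP[w /andP[Euw /IH]]; exact/connect_trans/connect1.
Qed.

Definition indeg (v : V) : nat := #|[set u | E u v]|.

Lemma n_edges_outdeg : n_edges E = \sum_u outdeg E u.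
Proof.
under eq_bigr do rewrite /outdeg -sum1dep_card.
by rewrite pair_big_dep /= sum1dep_card.
Qed.

Lemma n_edges_indeg : n_edges E = \sum_v indeg v.
Proof.
rewrite n_edges_outdeg; under eq_bigr do rewrite /outdeg -sum1dep_card.
rewrite (exchange_big_dep xpredT) //=.
by under eq_bigr do rewrite sum1dep_card.
Qed.

Lemma n_edges_out_leaves :
  \sum_v (outdeg E v).-1 + (#|V| - n_out_leaves E) = n_edges E.
Proof.
have -> : #|V| - n_out_leaves E = \sum_v (0 < outdeg E v).
  rewrite -(cardsC (out_leaves E)) addKn -sum1dep_card big_mkcond /=.
  by apply: eq_bigr => v _; rewrite !inE lt0n; case: eqP.
rewrite -big_split n_edges_outdeg; apply: eq_bigr => v _.
by case: (outdeg E v) => //= d; rewrite addn1.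
Qed.

End Walks.

Record arborescence (V : finType) (E : rel V) (r : V) : Prop := Arborescence {
  arb_reach : forall v, connect E r v;
  arb_root : forall u, ~~ E u r;
  arb_parent : forall u u' v, E u v -> E u' v -> u = u'
}.

Section Arborescence.
Variables (V : finType) (E : rel V) (r : V).

Lemma sum_nonroot : \sum_v (v != r : nat) = #|V|.-1.
Proof.
rewrite -big_mkcond sum1dep_card -(cardsC1 r).
by apply: eq_card => v; rewrite !inE.
Qed.

Lemma nonroot_indeg_gt0 v : connect E r v -> v != r -> 0 < indeg E v.
Proof.
move=> /connect_dwalkP[[|i]]; first by move=> /eqP->; rewrite eqxx.
rewrite dwalkSr => /existsP[u /andP[_ Euv]] _.
by rewrite card_gt0; apply/set0Pn; exists u; rewrite inE.
Qed.

Lemma out_tree_arborescence : out_tree E r -> arborescence E r.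
Proof.
move=> [_ [[_ n_edgesE] reach]].
have indegE v : indeg E v = (v != r).
  have le_indeg u : true -> (u != r) <= indeg E u ?= iff ((u != r : nat) == indeg E u).
    by move=> _; apply/leqif_eq; case: eqP => //= /eqP; exact: nonroot_indeg_gt0.
  have /leqif_sum/eq_leqif := le_indeg.
  by rewrite sum_nonroot -n_edges_indeg n_edgesE subn1 eqxx => /esym/forallP/(_ v)/eqP.
split=> // [u|u u' v Euv Eu'v].
  apply/negP => Eur; have /eqP := indegE r; rewrite eqxx cards_eq0.
  by move=> /eqP/setP/(_ u); rewrite !inE Eur.
have /card_le1_eqP : indeg E v <= 1 by rewrite indegE leq_b1.
by apply; rewrite inE.
Qed.

Section OfArborescence.
Hypothesis T : arborescence E r.

Lemma arb_dwalk_uniq i j v : dwalk E i r v -> dwalk E j r v -> i = j.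
Proof.
elim: i j v => [|i IH] [|j] v //; rewrite ?dwalkSr.
- by move=> /eqP<- /existsP[w /andP[_ Ewr]]; have := arb_root T w; rewrite Ewr.
- by move=> /existsP[w /andP[_ Ewv]] /eqP rv; have := arb_root T w; rewrite rv Ewv.
move=> /existsP[w /andP[Hw Ewv]] /existsP[w' /andP[Hw' Ew'v]].
by rewrite (IH j w) // (arb_parent T Ewv Ew'v).
Qed.

Lemma indeg_arborescence v : indeg E v = (v != r).
Proof.
case: eqP => [->|/eqP vr].
  apply/eqP; rewrite cards_eq0; apply/eqP/setP => u.
  by rewrite !inE (negbTE (arb_root T u)).
apply/eqP; rewrite eqn_leq (nonroot_indeg_gt0 (arb_reach T v) vr) andbT.
by apply/card_le1_eqP => u u'; rewrite !inE => Euv Eu'v; exact: (arb_parent T Eu'v Euv).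
Qed.

Lemma arborescence_out_tree : out_tree E r.
Proof.
split; last split; last exact: arb_reach T.
- move=> u v Euv; apply/negP => Evu.
  have [i ru] := (connect_dwalkP E r u).1 (arb_reach T u).
  have ru2 : dwalk E i.+2 r u.
    by rewrite dwalkSr; apply/existsP; exists v; rewrite Evu dwalkSr andbT;
       apply/existsP; exists u; rewrite ru Euv.
  by have := arb_dwalk_uniq ru ru2; lia.
split.
  have sym : connect_sym (und_adj E).
    by apply: sym_connect_sym => x y; rewrite /und_adj orbC.
  have rv v : connect (und_adj E) r v.
    by apply: connect_sub (arb_reach T v) => x y Exy; apply: connect1; rewrite /und_adj Exy.
  by move=> u v; apply: connect_trans (rv v); rewrite sym.
by rewrite n_edges_indeg (eq_bigr _ (fun v _ => indeg_arborescence v)) sum_nonroot subn1.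
Qed.

End OfArborescence.

Lemma out_treeP : out_tree E r <-> arborescence E r.
Proof. split; [exact: out_tree_arborescence | exact: arborescence_out_tree]. Qed.

End Arborescence.

(* A vertex of the tree with level degrees [d :: ds] is either its root
   [None] or a pair [(c, w)]: the [c]-th child of the root together with a
   vertex [w] of the subtree below that child, which has level degrees [ds]. *)
Fixpoint stree (ds : seq nat) : finType :=
  if ds is d :: ds' then (option ('I_d * stree ds') : finType) else (unit : finType).

Definition stree_root (ds : seq nat) : stree ds :=
  match ds return stree ds with [::] => tt | _ :: _ => None end.

Fixpoint stree_edge (ds : seq nat) : rel (stree ds) :=
  match ds return rel (stree ds) with
  | [::] => fun _ _ => false
  | d :: ds' => fun x y =>
     match x, y with
     | None, Some (_, w) => w == stree_root ds'
     | Some (c, w), Some (c', w') => (c == c') && stree_edge w w'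
     | _, _ => false
     end
  end.

Section SymmetricTree.
Variables (d : nat) (ds : seq nat).

Notation Node c w := (Some (c, w) : stree (d :: ds)).
Notation E := (@stree_edge (d :: ds)).
Notation E' := (@stree_edge ds).

Lemma stree_edge_Node c c' w w' : E (Node c w) (Node c' w') = (c == c') && E' w w'.
Proof. by []. Qed.

Lemma stree_edge_root y : E None y = if y is Some (_, w) then w == stree_root ds else false.
Proof. by []. Qed.

Lemma stree_edge_to_root x : E x None = false.
Proof. by case: x => [[]|]. Qed.

Lemma dwalk_stree_Node i c w y :
  dwalk E i (Node c w) y -> exists2 y', y = Node c y' & dwalk E' i w y'.
Proof.
elim: i w => [|i IH] w; first by move=> /eqP <-; exists w => //=; rewrite eqxx.
rewrite (dwalkSl E) => /existsP[[[c' x]|]]; rewrite ?stree_edge_to_root //.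
rewrite stree_edge_Node => /andP[/andP[/eqP <- Ewx] /IH[y' -> Hy']].
by exists y' => //; rewrite (dwalkSl E'); apply/existsP; exists x; rewrite Ewx.
Qed.

Lemma dwalk_Node_stree i c w w' : dwalk E' i w w' -> dwalk E i (Node c w) (Node c w').
Proof.
elim: i w => [|i IH] w; first by move=> /eqP ->; rewrite /= eqxx.
rewrite (dwalkSl E) (dwalkSl E') => /existsP[x /andP[Ewx /IH Hx]].
by apply/existsP; exists (Node c x); rewrite Hx andbT stree_edge_Node eqxx Ewx.
Qed.

Lemma outdeg_stree_root : outdeg E None = d.
Proof.
rewrite /outdeg; have -> : [set y | E None y] = [set Node c (stree_root ds) | c : 'I_d].
  apply/setP => -[[c w]|]; rewrite !inE stree_edge_root.
    by apply/eqP/imsetP => [->|[c' _ [_ ->]]] //; exists c.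
  by apply/esym/imsetP => -[].
by rewrite card_imset ?card_ord // => c c' [].
Qed.

Lemma outdeg_stree_Node c w : outdeg E (Node c w) = outdeg E' w.
Proof.
rewrite /outdeg.
have -> : [set y | E (Node c w) y] = [set Node c w' | w' in [set w' | E' w w']].
  apply/setP => -[[c' w']|]; rewrite !inE ?stree_edge_Node ?stree_edge_to_root.
    apply/andP/imsetP => [[/eqP <- Eww']|[w'' Hw'' [-> ->]]].
      by exists w'; rewrite // inE.
    by rewrite eqxx; move: Hw''; rewrite inE.
  by apply/esym/imsetP => -[].
by rewrite card_imset // => w1 w2 [].
Qed.

End SymmetricTree.

Lemma stree_arborescence ds : arborescence (@stree_edge ds) (stree_root ds).
Proof.
elim: ds => [|d ds [reach noroot uparent]]; first by split=> [[]|//|//]; exact: connect0.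
split.
- case=> [[c w]|]; last exact: connect0.
  have /connect_dwalkP[i Hi] := reach w; apply/connect_dwalkP; exists i.+1.
  rewrite dwalkSl; apply/existsP; exists (Some (c, stree_root ds)).
  by rewrite stree_edge_root eqxx dwalk_Node_stree.
- by move=> x; rewrite stree_edge_to_root.
move=> [[c1 w1]|] [[c2 w2]|] [[c w]|] //=; rewrite ?stree_edge_to_root //.
- by move=> /andP[/eqP <- E1] /andP[/eqP <- E2]; rewrite (uparent _ _ _ E1 E2).
- by move=> /andP[_] + /eqP wr; rewrite wr (negbTE (noroot _)).
- by move=> /eqP wr /andP[_]; rewrite wr (negbTE (noroot _)).
Qed.

Lemma outdeg_stree_dwalk ds i x :
  dwalk (@stree_edge ds) i (stree_root ds) x -> outdeg (@stree_edge ds) x = nth 0 ds i.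
Proof.
elim: ds i x => [|d ds IH] i x.
  move=> _; rewrite nth_nil; apply/eqP; rewrite cards_eq0.
  by apply/eqP/setP => y; rewrite !inE.
case: i => [/eqP <-|i]; first exact: outdeg_stree_root.
rewrite dwalkSl => /existsP[[[c w]|]] /andP[]; rewrite ?stree_edge_to_root //.
rewrite stree_edge_root => /eqP -> /dwalk_stree_Node[y -> Hy].
by rewrite outdeg_stree_Node (IH _ _ Hy).
Qed.

Lemma stree_symmetric ds : symmetric_out_tree (@stree_edge ds) (stree_root ds).
Proof.
split; first exact/arborescence_out_tree/stree_arborescence.
by move=> i u v [Hu _] [Hv _]; rewrite (outdeg_stree_dwalk Hu) (outdeg_stree_dwalk Hv).
Qed.

Lemma card_stree ds : all (fun d => 0 < d) ds ->
  #|stree ds| <= (size ds).+1 * \prod_(d <- ds) d.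
Proof.
elim: ds => [|d ds IH]; first by rewrite big_nil /= card_unit.
move=> /= /andP[d_gt0 /IH le_card]; rewrite card_option card_prod card_ord big_cons.
set m := #|_| in le_card *; set P := \prod_(_ <- _) _ in le_card *.
have m_gt0 : 0 < m by apply/card_gt0P; exists (stree_root ds).
have P_gt0 : 0 < P by move: le_card m_gt0; case: P => //; rewrite muln0; case: m.
have : d * m <= d * ((size ds).+1 * P) by rewrite leq_mul2l le_card orbT.
by move: d_gt0 P_gt0; set s := size ds; nia.
Qed.

Lemma stree_out_leaves ds : all (fun d => 0 < d) ds ->
  n_out_leaves (@stree_edge ds) <= \prod_(d <- ds) d.
Proof.
rewrite /n_out_leaves; elim: ds => [|d ds IH].
  by rewrite big_nil => _; apply: leq_trans (max_card _) _; rewrite card_unit.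
move=> /= /andP[d_gt0 /IH le_leaves]; rewrite big_cons.
have sub : out_leaves (@stree_edge (d :: ds)) \subset
    [set Some p | p in setX [set: 'I_d] (out_leaves (@stree_edge ds))].
  apply/subsetP => -[[c w]|]; rewrite inE ?outdeg_stree_root ?outdeg_stree_Node => leaf.
    by apply/imsetP; exists (c, w); rewrite // !inE.
  by move: d_gt0; rewrite (eqP leaf).
apply: leq_trans (subset_leq_card sub) _; apply: leq_trans (leq_imset_card _ _) _.
by rewrite cardsX cardsT card_ord leq_mul2l le_leaves orbT.
Qed.

Section Depth.
Variables (V : finType) (E : rel V) (r : V).
Hypothesis T : arborescence E r.

Definition depth (v : V) : nat := xchoose ((connect_dwalkP E r v).1 (arb_reach T v)).

Lemma depthP v : dwalk E (depth v) r v.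
Proof. exact: (xchooseP ((connect_dwalkP E r v).1 (arb_reach T v))). Qed.

Lemma depth_dwalk i v : dwalk E i r v -> depth v = i.
Proof. exact: (arb_dwalk_uniq T (depthP v)). Qed.

Lemma depth_eq0 v : (depth v == 0) = (v == r).
Proof.
apply/eqP/eqP => [dv|->]; last exact: (depth_dwalk (i:=0) (eqxx r)).
by have := depthP v; rewrite dv => /eqP.
Qed.

Lemma depth_edge u v : E u v -> depth v = (depth u).+1.
Proof.
by move=> Euv; apply: depth_dwalk; rewrite dwalkSr; apply/existsP; exists u; rewrite depthP.
Qed.

Lemma depth_lt_card v : depth v < #|V|.
Proof.
have sub : {subset iota 0 (depth v).+1 <= codom depth}.
  move=> i; rewrite mem_iota ltnS => le_iv; apply/codomP.
  have := depthP v; rewrite -(subnKC le_iv) => /dwalkD[u ru _].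
  by exists u; rewrite (depth_dwalk ru).
by have := uniq_leq_size (iota_uniq _ _) sub; rewrite size_iota size_codom.
Qed.

Definition parent (v : V) : V := odflt r [pick u | E u v].

Lemma parent_edge v : v != r -> E (parent v) v.
Proof.
move=> vr; rewrite /parent; case: pickP => [u //|none].
have := nonroot_indeg_gt0 (arb_reach T v) vr; rewrite card_gt0.
by case/set0Pn => u; rewrite inE none.
Qed.

Lemma depth_parent v : v != r -> depth v = (depth (parent v)).+1.
Proof. by move/parent_edge/depth_edge. Qed.

End Depth.

Definition kids (V : finType) (E : rel V) (v : V) : seq V := enum [set w | E v w].

Lemma size_kids (V : finType) (E : rel V) v : size (kids E v) = outdeg E v.
Proof. by rewrite -cardE. Qed.

Lemma mem_kids (V : finType) (E : rel V) v w : (w \in kids E v) = E v w.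
Proof. by rewrite mem_enum inE. Qed.

Section Embedding.
Variables (V V' : finType) (E : rel V) (E' : rel V') (r : V) (r' : V').
Hypotheses (T : arborescence E r) (T' : arborescence E' r').
Hypothesis outdeg_dominated : forall u v x,
  E u v -> depth T' x = depth T u -> outdeg E u <= outdeg E' x.

Local Notation parent := (parent E r).

(* The [i]-th child of a vertex at depth [k] goes to the [i]-th child of its
   image, which exists by [outdeg_dominated]. *)
Fixpoint emb (k : nat) (v : V) : V' :=
  if k is k'.+1 then
    nth r' (kids E' (emb k' (parent v))) (index v (kids E (parent v)))
  else r'.

Lemma index_kids_lt u v x :
  E u v -> depth T' x = depth T u -> index v (kids E u) < size (kids E' x).
Proof.
move=> Euv dx; rewrite size_kids; apply: leq_trans (outdeg_dominated Euv dx).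
by rewrite -size_kids index_mem mem_kids.
Qed.

Lemma emb_edge k v : v != r -> depth T' (emb k (parent v)) = depth T (parent v) ->
  E' (emb k (parent v)) (emb k.+1 v).
Proof.
move=> vr dx; rewrite [emb k.+1 v]/= -mem_kids; apply: mem_nth.
exact: index_kids_lt (parent_edge T vr) dx.
Qed.

Lemma depth_emb k v : depth T v = k -> depth T' (emb k v) = k.
Proof.
elim: k v => [|k IH] v dv; first by apply: depth_dwalk; rewrite /= eqxx.
have vr : v != r by rewrite -(depth_eq0 T) dv.
have dp : depth T (parent v) = k by have := depth_parent T vr; rewrite dv => -[].
by rewrite (depth_edge T' (emb_edge vr _)) (IH _ dp).
Qed.

Lemma emb_inj k v w : depth T v = k -> depth T w = k -> emb k v = emb k w -> v = w.
Proof.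
elim: k v w => [|k IH] v w dv dw.
  by move: dv dw => /eqP + /eqP; rewrite !(depth_eq0 T) => /eqP-> /eqP->.
have vr : v != r by rewrite -(depth_eq0 T) dv.
have wr : w != r by rewrite -(depth_eq0 T) dw.
have dpv : depth T (parent v) = k by have := depth_parent T vr; rewrite dv => -[].
have dpw : depth T (parent w) = k by have := depth_parent T wr; rewrite dw => -[].
have dxv : depth T' (emb k (parent v)) = depth T (parent v) by rewrite dpv depth_emb.
have dxw : depth T' (emb k (parent w)) = depth T (parent w) by rewrite dpw depth_emb.
move=> ew; have Ev := emb_edge vr dxv; have Ew := emb_edge wr dxw; rewrite ew in Ev.
have pvw : parent v = parent w by apply: IH dpv dpw (arb_parent T' Ev Ew).
move: ew; rewrite [emb k.+1 _]/= [emb k.+1 _]/= pvw => /eqP.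
have iv := index_kids_lt (parent_edge T vr) dxv.
have iw := index_kids_lt (parent_edge T wr) dxw.
rewrite pvw in iv; rewrite nth_uniq ?enum_uniq // => /eqP ivw.
have v_kid : v \in kids E (parent w) by rewrite mem_kids -pvw parent_edge.
have w_kid : w \in kids E (parent w) by rewrite mem_kids parent_edge.
by rewrite -(nth_index r v_kid) ivw nth_index.
Qed.

Lemma arborescence_subgraph : subgraph_of E E'.
Proof.
exists (fun v => emb (depth T v) v); split=> [v w|u v Euv].
  move=> ew; have dvw : depth T v = depth T w.
    by rewrite -(depth_emb (erefl (depth T v))) ew depth_emb.
  by apply: (emb_inj erefl (esym dvw)); rewrite ew dvw.
have vr : v != r by rewrite -(depth_eq0 T) (depth_edge T Euv).
have pv : parent v = u by apply: (arb_parent T (parent_edge T vr) Euv).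
have := emb_edge (k := depth T u) vr; rewrite pv (depth_edge T Euv); apply.
exact: depth_emb.
Qed.

End Embedding.

Lemma maxn1_le_pow2 d : maxn 1 d <= 2 ^ d.-1.
Proof. by case: d => [|d] //; rewrite (maxn_idPr _) // ltn_expl. Qed.

Lemma pow2_pred_le_expnn l : 2 ^ l.-1 <= l ^ l.
Proof.
case: l => [|[|l]] //; apply: leq_trans (leq_pexp2l _ (leqnSn _)) _ => //.
by rewrite leq_exp2r.
Qed.

Lemma predn_bigmax_le_sum (I : finType) (P : pred I) (F : I -> nat) :
  (\max_(i | P i) F i).-1 <= \sum_(i | P i) (F i).-1.
Proof.
rewrite -subn1 leq_subLR; apply/bigmax_leqP => i Pi.
by rewrite (bigD1 i) //=; lia.
Qed.

Section LevelDegrees.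
Variables (V : finType) (E : rel V) (r : V).
Hypothesis T : arborescence E r.

Definition level_outdeg (i : nat) : nat := \max_(v | depth T v == i) outdeg E v.

(* Depths are below [#|V|] and vertices at depth [#|V|.-1] are leaves, so
   [#|V|.-1] levels of inner vertices suffice. *)
Definition level_degs : seq nat := [seq maxn 1 (level_outdeg i) | i <- iota 0 #|V|.-1].

Lemma level_degs_gt0 : all (fun d => 0 < d) level_degs.
Proof. by rewrite all_map; apply/allP => i _ /=; rewrite leq_max. Qed.

Lemma size_level_degs : size level_degs = #|V|.-1.
Proof. by rewrite size_map size_iota. Qed.

Lemma level_degs_dominated u v x :
  E u v -> depth (stree_arborescence level_degs) x = depth T u ->
  outdeg E u <= outdeg (@stree_edge level_degs) x.
Proof.
move=> Euv dx; rewrite (outdeg_stree_dwalk (depthP (stree_arborescence level_degs) x)) dx.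
have lt_du : depth T u < #|V|.-1.
  by have := depth_lt_card T v; rewrite (depth_edge T Euv); case: #|V|.
rewrite (nth_map 0) ?size_iota // nth_iota // add0n.
by apply: leq_trans (leq_maxr _ _); apply: leq_bigmax_cond.
Qed.

Lemma sum_level_outdeg_le :
  \sum_(i <- iota 0 #|V|.-1) (level_outdeg i).-1 <= (n_out_leaves E).-1.
Proof.
apply: (@leq_trans (\sum_(i <- iota 0 #|V|.-1) \sum_(v | depth T v == i) (outdeg E v).-1)).
  by apply: leq_sum => i _; apply: predn_bigmax_le_sum.
rewrite (exchange_big_dep xpredT) //=.
apply: (@leq_trans (\sum_v (outdeg E v).-1)).
  apply: leq_sum => v _; rewrite big_const_seq iter_addn_0 -[leqRHS]muln1 leq_mul2l.
  rewrite (eq_count (a2 := pred1 (depth T v))) => [|i]; last by rewrite /= eq_sym.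
  by rewrite count_uniq_mem ?iota_uniq ?leq_b1 ?orbT.
have := n_edges_out_leaves E; have [_ [[_ ->] _]] := arborescence_out_tree T.
have := max_card (mem (out_leaves E)); rewrite -/(n_out_leaves E); lia.
Qed.

Lemma prod_level_degs_le : \prod_(d <- level_degs) d <= n_out_leaves E ^ n_out_leaves E.
Proof.
rewrite big_map; apply: leq_trans (leq_prod (fun i _ => maxn1_le_pow2 _)) _.
rewrite -expn_sum; apply: leq_trans (pow2_pred_le_expnn _).
by rewrite leq_pexp2l // sum_level_outdeg_le.
Qed.

End LevelDegrees.

Theorem mainTheorem18 (V : finType) (E : rel V) (r : V) :
  out_tree E r ->
  exists (V' : finType) (E' : rel V') (r' : V'),
    symmetric_out_tree E' r' /\
    subgraph_of E E' /\
    n_out_leaves E' <= n_out_leaves E ^ n_out_leaves E /\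
    #|V'| <= n_out_leaves E ^ n_out_leaves E * #|V|.
Proof.
move=> /out_treeP T; set ds := level_degs T.
exists (stree ds), (@stree_edge ds), (stree_root ds).
split; first exact: stree_symmetric.
split; first exact: arborescence_subgraph (@level_degs_dominated _ _ _ T).
split; first exact: leq_trans (stree_out_leaves (level_degs_gt0 T)) (prod_level_degs_le T).
apply: leq_trans (card_stree (level_degs_gt0 T)) _.
have V_gt0 : 0 < #|V| by apply/card_gt0P; exists r.
by rewrite size_level_degs prednK // mulnC leq_mul2r prod_level_degs_le orbT.
Qed.
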